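(* Let $n \ge 0$ be an integer and let $G$ be the figure-8 graph with $|V| = 7n+6$ vertices. Then for any two configurations $X_I, X_G$ of $|V|$ labeled robots on $G$ (each a bijection from the robot labels $\{1,\dots,|V|\}$ to $V$), there exists a finite sequence of valid synchronous moves taking $X_I$ to $X_G$; i.e., every multi-robot path planning instance $(G, X_I, X_G)$ on a figure-8 graph is feasible.
   Context: A figure-8 graph with parameter $n\ge 0$ consists of two distinct vertices $a,b$ joined by three internally vertex-disjoint paths having $n$, $3n+2$ and $3n+2$ internal vertices respectively (when $n=0$ the first path is the single edge $ab$); it has $7n+6$ vertices. Multi-robot path planning (MPP) on a simple, undirected, connected graph $G=(V,E)$: at each integer time step each robot occupies a vertex and a configuration is an injective map from robot labels to $V$ (here all vertices are occupied, so it is a bijection). From step $t$ to $t+1$ each robot either stays put or moves to an adjacent vertex, subject to: (i) the configuration at $t+1$ is again injective, and (ii) no two robots traverse the same edge in opposite directions. An instance $(G,X_I,X_G)$ asks for a sequence of such moves from $X_I$ to $X_G$; its makespan is the number of time steps used. *)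

From mathcomp Require Import all_boot.
Set Implicit Arguments. Unset Strict Implicit. Unset Printing Implicit Defensive.

(* Figure-8 graph with parameter n on vertex set 'I_(7n+6):
   a = 0, b = 1;
   path 1: a, 2, ..., n+1, b            (n internal vertices; edge ab if n = 0)
   path 2: a, n+2, ..., 4n+3, b         (3n+2 internal vertices)
   path 3: a, 4n+4, ..., 7n+5, b        (3n+2 internal vertices) *)
Definition fig8_paths (n : nat) : seq (seq nat) :=
  [:: 0 :: iota 2 n ++ [:: 1];
      0 :: iota (n + 2) (3 * n + 2) ++ [:: 1];
      0 :: iota (4 * n + 4) (3 * n + 2) ++ [:: 1]].

Definition consec (s : seq nat) (x y : nat) : bool :=
  has (fun p => (p == (x, y)) || (p == (y, x))) (zip s (behead s)).

Definition fig8_adj (n : nat) : rel 'I_(7 * n + 6) :=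
  fun x y => has (fun s => consec s x y) (fig8_paths n).

Definition valid_move (V R : finType) (adj : rel V) (X Y : {ffun R -> V}) : bool :=
  [&& injectiveb Y,
      [forall r, (Y r == X r) || adj (X r) (Y r)] &
      ~~ [exists r1, exists r2, [&& X r1 != Y r1, Y r1 == X r2 & Y r2 == X r1]]].

Definition mpp_feasible (V R : finType) (adj : rel V) (XI XG : {ffun R -> V}) : Prop :=
  exists s : seq {ffun R -> V}, path (valid_move adj) XI s && (last XI s == XG).

From mathcomp Require Import all_boot fingroup perm zify.
Set Implicit Arguments. Unset Strict Implicit. Unset Printing Implicit Defensive.

(* Rotating every robot one step along a cycle of length at least 3 is a single
   valid move, and permutations of the vertices realizable by moves are closed
   under products, inverses and conjugation.  Composing the rotations of the
   cycles through the paths 1-3, 1-2 and 2-3 of the figure-8 yields the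
   transposition of the branch vertex a with its neighbour q on the third path.
   Conjugating it by powers of the rotations of the cycles 2-3 and 1-3 swaps a
   with every other vertex; such transpositions generate all permutations, and
   any two full configurations differ by a permutation. *)


Section Realizable.

Variables (V R : finType) (adj : rel V).

Local Open Scope group_scope.

Lemma feasible_refl (X : {ffun R -> V}) : mpp_feasible adj X X.
Proof. by exists [::]; rewrite /= eqxx. Qed.

Lemma feasible_trans (X Y Z : {ffun R -> V}) :
  mpp_feasible adj X Y -> mpp_feasible adj Y Z -> mpp_feasible adj X Z.
Proof.
move=> [s1 /andP[path1 /eqP last1]] [s2 /andP[path2 last2]].
by exists (s1 ++ s2); rewrite cat_path last_cat last1 path1 path2.
Qed.

Lemma valid_move_feasible (X Y : {ffun R -> V}) :
  valid_move adj X Y -> mpp_feasible adj X Y.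
Proof. by move=> XY; exists [:: Y]; rewrite /= XY eqxx. Qed.

Definition move_by (s : {perm V}) (X : {ffun R -> V}) : {ffun R -> V} :=
  [ffun r => s (X r)].

Lemma move_by_inj (s : {perm V}) (X : {ffun R -> V}) :
  injective X -> injective (move_by s X).
Proof. by move=> injX r1 r2; rewrite !ffunE => /perm_inj/injX. Qed.

Lemma move_by1 (X : {ffun R -> V}) : move_by 1 X = X.
Proof. by apply/ffunP => r; rewrite ffunE perm1. Qed.

Lemma move_byM (s t : {perm V}) (X : {ffun R -> V}) :
  move_by (s * t) X = move_by t (move_by s X).
Proof. by apply/ffunP => r; rewrite !ffunE permM. Qed.

Definition realizable (s : {perm V}) : Prop :=
  forall X : {ffun R -> V}, injective X -> mpp_feasible adj X (move_by s X).

Lemma realizable1 : realizable 1.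
Proof. by move=> X _; rewrite move_by1; apply: feasible_refl. Qed.

Lemma realizableM (s t : {perm V}) : realizable s -> realizable t -> realizable (s * t).
Proof.
move=> rs rt X injX; rewrite move_byM.
by apply: feasible_trans (rs X injX) (rt _ _); apply: move_by_inj.
Qed.

Lemma realizableX (s : {perm V}) k : realizable s -> realizable (s ^+ k).
Proof.
move=> rs; elim: k => [|k IHk]; first by rewrite expg0; apply: realizable1.
by rewrite expgS; apply: realizableM.
Qed.

Lemma realizableV (s : {perm V}) : realizable s -> realizable s^-1.
Proof. by rewrite invg_expg; apply: realizableX. Qed.

Lemma realizableJ (s t : {perm V}) : realizable s -> realizable t -> realizable (t ^ s).
Proof.
by move=> rs rt; rewrite conjgE; apply: realizableM (realizableV rs) (realizableM rt rs).
Qed.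

(* A 2-cycle of s would make two robots swap along an edge. *)
Lemma realizable_single_move (s : {perm V}) :
    (forall v, s v = v \/ adj v (s v)) ->
    (forall v, s (s v) = v -> s v = v) ->
  realizable s.
Proof.
move=> s_edge s_no_swap X injX; apply/valid_move_feasible/and3P; split.
- exact/injectiveP/move_by_inj.
- apply/forallP => r; rewrite ffunE.
  by case: (s_edge (X r)) => [->|->]; rewrite ?eqxx ?orbT.
- apply/existsP => -[r1 /existsP[r2]]; rewrite !ffunE.
  case/and3P=> moved /eqP s1 /eqP s2.
  by move: moved; rewrite s_no_swap ?eqxx // s1 s2.
Qed.

Lemma realizable_tpermJ (x y : V) (s : {perm V}) :
  realizable (tperm x y) -> realizable s -> realizable (tperm (s x) (s y)).
Proof. by move=> rxy rs; rewrite -tpermJ; apply: realizableJ. Qed.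

Lemma realizable_tperm_trans (x y z : V) :
  realizable (tperm x y) -> realizable (tperm y z) -> realizable (tperm x z).
Proof.
move=> rxy ryz; have [->|zx] := eqVneq z x; first by rewrite tperm1; apply: realizable1.
have [<-|zy] := eqVneq y z; first by [].
have -> : tperm x z = tperm y z ^ tperm x y by rewrite tpermJ tpermR tpermD // eq_sym.
exact: realizableJ.
Qed.

Lemma realizable_tperm_orbit (x : V) (s : {perm V}) j :
  realizable s -> realizable (tperm x (s x)) -> realizable (tperm x ((s ^+ j) x)).
Proof.
move=> rs rxs; elim: j => [|j IHj]; first by rewrite expg0 perm1 tperm1; apply: realizable1.
apply: realizable_tperm_trans IHj _.
by rewrite expgS permM; apply: realizable_tpermJ; last exact: realizableX.
Qed.

Lemma realizable_of_hub (h : V) :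
  (forall v, realizable (tperm h v)) -> forall s : {perm V}, realizable s.
Proof.
move=> hub s; have [ts -> _] := prod_tpermP s.
elim: ts => [|t ts IHts]; first by rewrite big_nil; apply: realizable1.
rewrite big_cons; apply: realizableM IHts.
by apply: realizable_tperm_trans (hub t.2); rewrite tpermC.
Qed.

End Realizable.

Lemma injective_ffun_perm (V : finType) (X Y : {ffun V -> V}) :
  injective X -> injective Y -> exists s : {perm V}, Y = [ffun r => s (X r)].
Proof.
move=> injX injY; have inj_YXinv : injective (fun v => Y (invF injX v)).
  by move=> u v /injY/(can_inj (f_invF injX)).
by exists (perm inj_YXinv); apply/ffunP => r; rewrite ffunE permE invF_f.
Qed.

Lemma consec_cons x s a b : consec s a b -> consec (x :: s) a b.
Proof. by case: s => [//|y s]; rewrite /consec /= => ->; rewrite orbT. Qed.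

Lemma consec_nth s i x y :
  i.+1 < size s -> nth 0 s i = x -> nth 0 s i.+1 = y -> consec s x y.
Proof.
move=> + <- <-; elim: s i => [//|x0 s IHs] [|i] /=.
- by case: s IHs => [//|y0 s] _ _; rewrite /consec /= eqxx.
- by move=> lt_i; apply/consec_cons/IHs.
Qed.

Lemma consecC s x y : consec s x y = consec s y x.
Proof. by apply: eq_has => p; rewrite orbC. Qed.

Definition branch (m k : nat) : seq nat := 0 :: iota m k ++ [:: 1].

Lemma size_branch m k : size (branch m k) = k.+2.
Proof. by rewrite /= size_cat size_iota addn1. Qed.

Lemma nth_branch m k j : j < k -> nth 0 (branch m k) j.+1 = m + j.
Proof. by move=> lt_jk; rewrite /= nth_cat size_iota lt_jk nth_iota. Qed.

Lemma nth_branch_last m k : nth 0 (branch m k) k.+1 = 1.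
Proof. by rewrite /= nth_cat size_iota ltnn subnn. Qed.

Lemma branch_first m k x y : x = 0 -> y = m -> 0 < k -> consec (branch m k) x y.
Proof.
by move=> -> -> k_gt0; apply: (@consec_nth _ 0); rewrite ?size_branch ?nth_branch ?addn0.
Qed.

Lemma branch_step m k x y : m <= x -> y = x.+1 -> y < m + k -> consec (branch m k) x y.
Proof.
move=> le_mx -> lt_y; apply: (@consec_nth _ (x - m).+1); rewrite ?size_branch ?nth_branch; lia.
Qed.

Lemma branch_last m k x y : x.+1 = m + k -> y = 1 -> 0 < k -> consec (branch m k) x y.
Proof.
case: k => [//|k] xE -> _; apply: (@consec_nth _ k.+1).
- by rewrite size_branch.
- by rewrite nth_branch; lia.
- exact: nth_branch_last.
Qed.

Lemma branch_direct m k x y : k = 0 -> x = 0 -> y = 1 -> consec (branch m k) x y.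
Proof. by move=> -> -> ->. Qed.

Section Figure8.

Variable n : nat.

Local Notation N := (7 * n + 6).

Definition fig8_rel : rel nat := fun x y => has (fun s => consec s x y) (fig8_paths n).

Lemma fig8_relC x y : fig8_rel x y -> fig8_rel y x.
Proof. by apply: sub_has => s; rewrite consecC. Qed.

Lemma fig8_rel_path1 x y : consec (branch 2 n) x y -> fig8_rel x y.
Proof. by rewrite /fig8_rel /= => ->. Qed.

Lemma fig8_rel_path2 x y : consec (branch (n + 2) (3 * n + 2)) x y -> fig8_rel x y.
Proof. by rewrite /fig8_rel /= => ->; rewrite orbT. Qed.

Lemma fig8_rel_path3 x y : consec (branch (4 * n + 4) (3 * n + 2)) x y -> fig8_rel x y.
Proof. by rewrite /fig8_rel /= => ->; rewrite !orbT. Qed.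

Ltac branch_edge := first
  [ solve [apply: branch_step; lia] | solve [apply: branch_first; lia]
  | solve [apply: branch_last; lia] | solve [apply: branch_direct; lia] ].

Ltac fig8_edge := first
  [ apply: fig8_rel_path1; branch_edge | apply: fig8_rel_path2; branch_edge
  | apply: fig8_rel_path3; branch_edge
  | apply: fig8_relC; first
    [ apply: fig8_rel_path1; branch_edge | apply: fig8_rel_path2; branch_edge
    | apply: fig8_rel_path3; branch_edge ] ].

(* One-step rotations of the three cycles of the figure-8, with a = 0, b = 1:
   rot23 : a -> 4n+4 -> ... -> 7n+5 -> b -> 4n+3 -> ... -> n+2 -> a,
   rot13 : b -> 7n+5 -> ... -> 4n+4 -> a -> 2 -> ... -> n+1 -> b,
   rot12 : a -> n+2 -> ... -> 4n+3 -> b -> n+1 -> ... -> 2 -> a. *)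
Definition rot23 (v : nat) : nat :=
  if v == 0 then 4 * n + 4 else if v == 1 then 4 * n + 3 else if v == n + 2 then 0
  else if v == 7 * n + 5 then 1 else if (n + 2 < v) && (v <= 4 * n + 3) then v - 1
  else if (4 * n + 4 <= v) && (v < 7 * n + 5) then v + 1 else v.

Definition rot13 (v : nat) : nat :=
  if v == 1 then 7 * n + 5 else if v == 0 then (if n == 0 then 1 else 2)
  else if (2 <= v) && (v <= n + 1) then (if v == n + 1 then 1 else v + 1)
  else if v == 4 * n + 4 then 0 else if (4 * n + 4 < v) && (v <= 7 * n + 5) then v - 1
  else v.

Definition rot12 (v : nat) : nat :=
  if v == 0 then n + 2 else if v == 1 then (if n == 0 then 0 else n + 1)
  else if (2 <= v) && (v <= n + 1) then (if v == 2 then 0 else v - 1)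
  else if (n + 2 <= v) && (v < 4 * n + 3) then v + 1 else if v == 4 * n + 3 then 1
  else v.

Record single_move (f : nat -> nat) := SingleMove {
  single_move_lt : forall v, v < N -> f v < N;
  single_move_inj : forall u v, u < N -> v < N -> f u = f v -> u = v;
  single_move_edge : forall v, v < N -> f v = v \/ fig8_rel v (f v);
  single_move_no_swap : forall v w, v < N -> f v = w -> f w = v -> w = v }.

Ltac single_move_cases := split; rewrite /rot23 /rot13 /rot12;
  [ move=> v; repeat case: ifP => ?; lia
  | move=> u v; repeat case: ifP => ?; lia
  | move=> v lt_v; repeat case: ifP => ?; first [left; lia | right; fig8_edge]
  | move=> v w; repeat case: ifP => ?; lia ].

Lemma single_move_rot23 : single_move rot23. Proof. single_move_cases. Qed.
Lemma single_move_rot13 : single_move rot13. Proof. single_move_cases. Qed.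
Lemma single_move_rot12 : single_move rot12. Proof. single_move_cases. Qed.

Definition move_fun f (fM : single_move f) (x : 'I_N) : 'I_N :=
  Ordinal (single_move_lt fM (ltn_ord x)).

Lemma move_fun_inj f (fM : single_move f) : injective (move_fun fM).
Proof.
move=> x y /(congr1 val) /= fxy; apply: ord_inj.
exact: (single_move_inj fM (ltn_ord x) (ltn_ord y) fxy).
Qed.

Definition move_perm f (fM : single_move f) : {perm 'I_N} := perm (@move_fun_inj _ fM).

Lemma move_permE f (fM : single_move f) x : move_perm fM x = f x :> nat.
Proof. by rewrite permE. Qed.

Lemma move_permX f (fM : single_move f) j x :
  (move_perm fM ^+ j)%g x = iter j f x :> nat.
Proof. by rewrite permX; elim: j => [//|j IHj]; rewrite !iterS move_permE IHj. Qed.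

Local Notation realizable8 s := (realizable 'I_N (@fig8_adj n) s).

Lemma realizable_move_perm f (fM : single_move f) : realizable8 (move_perm fM).
Proof.
apply: realizable_single_move => [v|v].
  case: (single_move_edge fM (ltn_ord v)) => [fv|].
    by left; apply: ord_inj; rewrite move_permE.
  by right; rewrite /fig8_adj move_permE.
move=> /(congr1 (@nat_of_ord _)); rewrite !move_permE => ffv.
apply: ord_inj; rewrite move_permE.
exact: (single_move_no_swap fM (ltn_ord v) (erefl _) ffv).
Qed.

Lemma rot_composition v : v < N ->
  rot23 (rot12 (rot13 v)) = if v == 0 then 4 * n + 4 else if v == 4 * n + 4 then 0 else v.
Proof.
move=> lt_v; suff composition w1 w2 : rot13 v = w1 -> rot12 w1 = w2 ->
    rot23 w2 = if v == 0 then 4 * n + 4 else if v == 4 * n + 4 then 0 else v.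
  exact: composition.
by rewrite /rot23 /rot12 /rot13; repeat case: ifP => ?; lia.
Qed.

Lemma a_lt : 0 < N. Proof. lia. Qed.
Lemma q_lt : 4 * n + 4 < N. Proof. lia. Qed.

Definition a : 'I_N := Ordinal a_lt.
Definition q : 'I_N := Ordinal q_lt.

Definition rot23_perm := move_perm single_move_rot23.
Definition rot13_perm := move_perm single_move_rot13.
Definition rot12_perm := move_perm single_move_rot12.

Lemma tperm_a_q : tperm a q = (rot13_perm * rot12_perm * rot23_perm)%g.
Proof.
apply/permP => x; apply: ord_inj.
rewrite !permM !move_permE rot_composition ?ltn_ord //.
case: tpermP => [->|->|xa xq] //=; first by rewrite addn4 eqxx.
have /negbTE -> : x != 0 :> nat by apply: contra_not_neq xa => xE; apply: ord_inj.
by have /negbTE -> : x != 4 * n + 4 :> nat by apply: contra_not_neq xq => xE; apply: ord_inj.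
Qed.

Lemma realizable_tperm_a_q : realizable8 (tperm a q).
Proof. by rewrite tperm_a_q; do !apply: realizableM; apply: realizable_move_perm. Qed.

Lemma rot23_perm_a : rot23_perm a = q.
Proof. by apply: ord_inj; rewrite move_permE /= /rot23 eqxx. Qed.

Lemma rot13_q : rot13 (4 * n + 4) = 0.
Proof. by rewrite /rot13; repeat case: ifP => ?; lia. Qed.

Lemma rot13_perm_q : rot13_perm q = a.
Proof. by apply: ord_inj; rewrite move_permE rot13_q. Qed.

Ltac rot_cases := rewrite /rot23 /rot13 ?eqxx /=; repeat case: ifP => ?; lia.

Lemma rot23_iter_path3 i : i < 3 * n + 2 -> iter i.+1 rot23 0 = 4 * n + 4 + i.
Proof.
elim: i => [|i IHi] lt_i; first by rot_cases.
by rewrite iterS IHi; [rot_cases|lia].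
Qed.

Lemma rot23_iter_b : iter (3 * n + 3) rot23 0 = 1.
Proof.
have -> : 3 * n + 3 = (3 * n + 1).+2 by lia.
by rewrite iterS rot23_iter_path3; [rot_cases|lia].
Qed.

Lemma rot23_iter_path2 i : i < 3 * n + 2 -> iter (3 * n + 4 + i) rot23 0 = 4 * n + 3 - i.
Proof.
elim: i => [|i IHi] lt_i.
  by rewrite addn0 (_ : 3 * n + 4 = (3 * n + 3).+1) ?iterS ?rot23_iter_b; [rot_cases|lia].
by rewrite addnS iterS IHi; [rot_cases|lia].
Qed.

Lemma rot13_iter_path1 i : i < n -> iter i.+2 rot13 (4 * n + 4) = 2 + i.
Proof.
elim: i => [|i IHi] lt_i; first by rewrite /= rot13_q; rot_cases.
by rewrite iterS IHi; [rot_cases|lia].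
Qed.

Lemma realizable_tperm_a v : realizable8 (tperm a v).
Proof.
have via_rot23 j : iter j rot23 0 = v -> realizable8 (tperm a v).
  move=> vE; have -> : v = (rot23_perm ^+ j)%g a by apply: ord_inj; rewrite move_permX.
  apply: realizable_tperm_orbit; first exact: realizable_move_perm.
  by rewrite rot23_perm_a; apply: realizable_tperm_a_q.
have via_rot13 j : iter j rot13 (4 * n + 4) = v -> realizable8 (tperm a v).
  move=> vE; apply: realizable_tperm_trans realizable_tperm_a_q _.
  have -> : v = (rot13_perm ^+ j)%g q by apply: ord_inj; rewrite move_permX.
  apply: realizable_tperm_orbit; first exact: realizable_move_perm.
  by rewrite rot13_perm_q tpermC; apply: realizable_tperm_a_q.
have lt_v := ltn_ord v.
have [v0|v_neq0] := eqVneq (v : nat) 0; first exact: (via_rot23 0).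
have [v1|v_neq1] := eqVneq (v : nat) 1.
  by apply: (via_rot23 (3 * n + 3)); rewrite rot23_iter_b.
case: (ltnP (v : nat) (n + 2)) => [v_path1|v_ge].
  by apply: (via_rot13 (v - 2).+2); rewrite rot13_iter_path1; lia.
case: (ltnP (v : nat) (4 * n + 4)) => [v_path2|v_path3].
  by apply: (via_rot23 (3 * n + 4 + (4 * n + 3 - v))); rewrite rot23_iter_path2; lia.
by apply: (via_rot23 (v - (4 * n + 4)).+1); rewrite rot23_iter_path3; lia.
Qed.

End Figure8.

Theorem lemma1 (n : nat) (XI XG : {ffun 'I_(7 * n + 6) -> 'I_(7 * n + 6)}) :
  injective XI -> injective XG -> mpp_feasible (@fig8_adj n) XI XG.
Proof.
move=> injXI injXG; have [s ->] := injective_ffun_perm injXI injXG.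
exact: realizable_of_hub (@realizable_tperm_a n) s XI injXI.
Qed.
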